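(* The bidirected quarter-grid, the ascending cyclically directed quarter-grid, the descending cyclically directed quarter-grid, and every complete ray digraph each have precisely one end.
   Context: A ray is an orientation of a one-way infinite path with every edge oriented towards infinity; an anti-ray is one with every edge oriented away from infinity; a dipath is a directed path. For rays or anti-rays $Q,R$ write $Q\le R$ if there are infinitely many pairwise disjoint $Q$--$R$ dipaths, and $Q\sim R$ if $Q\le R$ and $R\le Q$; the ends of a digraph are the equivalence classes of $\sim$ on its rays and anti-rays. In all following definitions start with infinitely many pairwise disjoint rays $R_i=x^i_1x^i_2\ldots$ ($i\ge1$). Bidirected quarter-grid: add the edges $x^i_{4j+7}x^{i+1}_{4j+1}$ and $x^{i+1}_{4j+2}x^i_{4j+8}$ for all $j\ge 0$, $i\ge 1$, then suppress every vertex $v\in V(R_i)$ with $d^-(v)=d^+(v)=1$ all of whose neighbours lie on $R_i$. Ascending cyclically directed quarter-grid: add the edges $x^1_jx^2_j$ for all odd $j$, $x^i_{j+3}x^{i+1}_j$ for all $i\ge2$ and all odd $j$, and $x^i_2x^1_{2(i-1)}$ for all $i\ge 2$. Descending cyclically directed quarter-grid: add the edges $x^{i+1}_jx^i_{j+1}$ for all even $j$ and all $i\ge1$, and $x^1_{2i}x^{i+1}_1$ for all $i\ge 1$. Complete ray digraph: the union of the rays $R_i$ together with, for every two distinct $i,i'$, infinitely many disjoint $R_i$--$R_{i'}$ dipaths and infinitely many disjoint $R_{i'}$--$R_i$ dipaths, such that none of these dipaths meets any ray $R_j$ other than its two end rays, all these additional dipaths are pairwise disjoint, and the starting vertex of each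 $R_i$ is the end vertex of an $R_1$--$R_i$ dipath. *)

From Stdlib Require Import List Arith.
Import ListNotations.

Record digraph := Digraph {
  vtype : Type;
  vx    : vtype -> Prop;
  arc   : vtype -> vtype -> Prop
}.

Section Notions.
Variable D : digraph.
Local Notation V := (vtype D).

Definition is_ray (r : nat -> V) : Prop :=
  (forall n, vx D (r n)) /\
  (forall m n, r m = r n -> m = n) /\
  (forall n, arc D (r n) (r (S n))).

Definition is_antiray (r : nat -> V) : Prop :=
  (forall n, vx D (r n)) /\
  (forall m n, r m = r n -> m = n) /\
  (forall n, arc D (r (S n)) (r n)).

Definition ray_or_antiray (r : nat -> V) : Prop := is_ray r \/ is_antiray r.

Definition on (r : nat -> V) (v : V) : Prop := exists n, r n = v.

Fixpoint chain (l : list V) : Prop :=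
  match l with
  | x :: ((y :: _) as t) => arc D x y /\ chain t
  | _ => True
  end.

Definition is_dipath (p : list V) : Prop :=
  p <> [] /\ NoDup p /\ (forall v, In v p -> vx D v) /\ chain p.

Definition AB_dipath (A B : V -> Prop) (p : list V) : Prop :=
  is_dipath p /\
  (exists x l, p = x :: l /\ A x /\ forall v, In v p -> A v -> v = x) /\
  (exists l y, p = l ++ [y] /\ B y /\ forall v, In v p -> B v -> v = y).

Definition disjoint_paths (p q : list V) : Prop :=
  forall v, In v p -> ~ In v q.

Definition ray_le (Q R : nat -> V) : Prop :=
  exists f : nat -> list V,
    (forall n, AB_dipath (on Q) (on R) (f n)) /\
    (forall m n, m <> n -> disjoint_paths (f m) (f n)).

Definition ray_equiv (Q R : nat -> V) : Prop := ray_le Q R /\ ray_le R Q.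

Definition has_exactly_one_end : Prop :=
  (exists r, ray_or_antiray r) /\
  (forall Q R, ray_or_antiray Q -> ray_or_antiray R -> ray_equiv Q R).

End Notions.

(* Quarter-grid constructions.  The vertex x^i_j (i, j >= 1) of the ray
   R_i = x^i_1 x^i_2 ... is represented by the pair (i, j) : nat * nat. *)

Definition qvx (v : nat * nat) : Prop := 1 <= fst v /\ 1 <= snd v.

Definition ray_edge (u w : nat * nat) : Prop :=
  fst w = fst u /\ snd w = S (snd u).

Definition suppressible (E : nat * nat -> nat * nat -> Prop) (v : nat * nat) : Prop :=
  qvx v /\
  (exists u, E u v /\ forall u', E u' v -> u' = u) /\
  (exists w, E v w /\ forall w', E v w' -> w' = w) /\
  (forall u, E u v \/ E v u -> fst u = fst v).

Inductive supp_walk (E : nat * nat -> nat * nat -> Prop) : nat * nat -> nat * nat -> Prop :=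
  | sw_one : forall u w, E u w -> supp_walk E u w
  | sw_step : forall u v w, E u v -> suppressible E v -> supp_walk E v w -> supp_walk E u w.

(* The digraph obtained by suppressing every suppressible vertex: the
   suppressible vertices are removed, and each maximal chain
   u -> v1 -> ... -> v(k-1) -> w through removed vertices becomes an edge u -> w. *)
Definition suppress (E : nat * nat -> nat * nat -> Prop) : digraph :=
  {| vtype := nat * nat;
     vx := fun v => qvx v /\ ~ suppressible E v;
     arc := fun u w => (qvx u /\ ~ suppressible E u) /\ (qvx w /\ ~ suppressible E w)
                       /\ supp_walk E u w |}.

Definition bqg_pre_edge (u w : nat * nat) : Prop :=
  qvx u /\ qvx w /\
  (ray_edge u w \/
   (exists i j, 1 <= i /\ u = (i, 4*j+7) /\ w = (i+1, 4*j+1)) \/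
   (exists i j, 1 <= i /\ u = (i+1, 4*j+2) /\ w = (i, 4*j+8))).

Definition bidirected_quarter_grid : digraph := suppress bqg_pre_edge.

Definition odd_nat (j : nat) : Prop := exists k, j = 2*k+1.
Definition even_nat (j : nat) : Prop := exists k, j = 2*k.

Definition ascending_cdqg : digraph :=
  {| vtype := nat * nat;
     vx := qvx;
     arc := fun u w => qvx u /\ qvx w /\
       (ray_edge u w \/
        (exists j, odd_nat j /\ u = (1, j) /\ w = (2, j)) \/
        (exists i j, 2 <= i /\ odd_nat j /\ u = (i, j+3) /\ w = (i+1, j)) \/
        (exists i, 2 <= i /\ u = (i, 2) /\ w = (1, 2*(i-1)))) |}.

Definition descending_cdqg : digraph :=
  {| vtype := nat * nat;
     vx := qvx;
     arc := fun u w => qvx u /\ qvx w /\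
       (ray_edge u w \/
        (exists i j, 1 <= i /\ even_nat j /\ u = (i+1, j) /\ w = (i, j+1)) \/
        (exists i, 1 <= i /\ u = (1, 2*i) /\ w = (i+1, 1))) |}.

(* Complete ray digraphs.  Rays are indexed from 0: R 0 plays the role of
   R_1 of the paper.  The set of additional dipaths is the predicate P. *)
Definition is_complete_ray_digraph (D : digraph) : Prop :=
  exists (R : nat -> nat -> vtype D) (P : list (vtype D) -> Prop),
    (forall i, is_ray D (R i)) /\
    (forall i j m n, i <> j -> R i m <> R j n) /\
    (forall p, P p -> exists i i', i <> i' /\
        AB_dipath D (on D (R i)) (on D (R i')) p /\
        (forall j v, j <> i -> j <> i' -> In v p -> ~ on D (R j) v)) /\
    (forall p q, P p -> P q -> p <> q -> disjoint_paths D p q) /\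
    (forall i i', i <> i' -> exists f : nat -> list (vtype D),
        (forall n, P (f n) /\ AB_dipath D (on D (R i)) (on D (R i')) (f n)) /\
        (forall m n, f m = f n -> m = n)) /\
    (forall i, i <> 0 -> exists p l, P p /\
        AB_dipath D (on D (R 0)) (on D (R i)) p /\ p = l ++ [R i 0]) /\
    (forall v, vx D v -> (exists i n, R i n = v) \/ (exists p, P p /\ In v p)) /\
    (forall u w, arc D u w ->
        (exists i n, u = R i n /\ w = R i (S n)) \/
        (exists p l1 l2, P p /\ p = l1 ++ u :: w :: l2)).

(* To prove Q <= R it is enough that for every finite vertex set F some vertex of Q outside
   F reaches some vertex of R while avoiding F: a shortest such walk is a Q--R dipath, and
   picking each new dipath to avoid all earlier ones yields infinitely many disjoint ones.

   In each quarter-grid a ray leaves every box; from outside a box one can funnel into the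
   first ray, and from far along the first ray reach everything far enough out, without
   entering the box. A potential that never decreases along arcs and has finite sublevel
   sets excludes anti-rays.

   In a complete ray digraph an (anti-)ray cannot stay inside one finite connecting dipath,
   so it meets the rays R_i infinitely often. Connecting dipaths lead from far along any R_i
   to far along R_1, and from there to far along a ray visited unboundedly often or, through
   the dipaths ending at the starting vertices, to rays of arbitrarily large index. *)

From Stdlib Require Import List ListDec Arith Lia Classical ClassicalEpsilon Relations.
Import ListNotations.

(** * Routing around finite sets *)

Lemma injective_preimage_bounded {A} (X : nat -> A) :
  (forall a b, X a = X b -> a = b) -> forall L, exists b, forall t, In (X t) L -> t < b.
Proof.
  intros Hinj L. induction L as [|a L [b Hb]].
  - exists 0. intros t [].
  - destruct (classic (exists t0, X t0 = a)) as [[t0 Ht0]|Hno].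
    + exists (max b (S t0)). intros t [Ht|Ht].
      * rewrite <- Ht0 in Ht. apply Hinj in Ht. lia.
      * apply Hb in Ht. lia.
    + exists b. intros t [Ht|Ht]; [exfalso; eauto|auto].
Qed.

Lemma injective_avoids_list {A} (X : nat -> A) (Pr : A -> Prop) :
  (forall a b, X a = X b -> a = b) -> (forall t, exists t', t <= t' /\ Pr (X t')) ->
  forall L, exists t, Pr (X t) /\ ~ In (X t) L.
Proof.
  intros Hinj Hinf L. destruct (injective_preimage_bounded X Hinj L) as [b Hb].
  destruct (Hinf b) as [t [Hbt HPr]]. exists t. split; auto.
  intro Hin. apply Hb in Hin. lia.
Qed.

Section Dipaths.
Variable D : digraph.
Local Notation V := (vtype D).

Lemma ray_or_antiray_injective X : ray_or_antiray D X -> forall a b, X a = X b -> a = b.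
Proof. intros [[_ [H _]]|[_ [H _]]]; auto. Qed.

Lemma ray_or_antiray_vx X : ray_or_antiray D X -> forall n, vx D (X n).
Proof. intros [[H _]|[H _]]; auto. Qed.

Definition step_within (U : V -> Prop) (x y : V) := arc D x y /\ vx D y /\ U y.
Definition reach_within U := clos_refl_trans V (step_within U).
Definition avoiding (F : list V) (v : V) := ~ In v F.
Definition ends_with (p : list V) y := exists l, p = l ++ [y].

Lemma ends_with_In p y : ends_with p y -> In y p.
Proof. intros [l ->]. apply in_or_app. simpl; auto. Qed.

Lemma ends_with_app a p y : ends_with p y -> ends_with (a ++ p) y.
Proof. intros [l ->]. exists (a ++ l). apply app_assoc. Qed.

Lemma ends_with_app_cons a v c y : ends_with (a ++ v :: c) y -> ends_with (v :: c) y.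
Proof.
  intros [l Hl]. destruct c as [|z c] using rev_ind.
  - apply app_inj_tail in Hl. destruct Hl as [_ ->]. exists []. reflexivity.
  - rewrite app_comm_cons, app_assoc in Hl. apply app_inj_tail in Hl.
    destruct Hl as [_ ->]. exists (v :: c). reflexivity.
Qed.

Lemma chain_app_cons a v c : chain D (a ++ v :: c) <-> chain D (a ++ [v]) /\ chain D (v :: c).
Proof.
  induction a as [|x [|y a] IH]; simpl in *; [tauto|tauto|]. rewrite IH. tauto.
Qed.

Definition walk_within (A B U : V -> Prop) (p : list V) :=
  chain D p /\ (forall v, In v p -> vx D v /\ U v) /\
  (exists x l, p = x :: l /\ A x) /\ (exists y, ends_with p y /\ B y).

Lemma walk_within_suffix A B U a v c :
  walk_within A B U (a ++ v :: c) -> A v -> walk_within A B U (v :: c).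
Proof.
  intros [Hc [Hall [_ [y [Hy HB]]]]] HA. apply chain_app_cons in Hc.
  split; [tauto|split; [|split]].
  - intros w Hw. apply Hall, in_or_app. auto.
  - exists v, c. auto.
  - exists y. split; auto. eapply ends_with_app_cons; eauto.
Qed.

Lemma walk_within_prefix A B U a v c :
  walk_within A B U (a ++ v :: c) -> B v -> walk_within A B U (a ++ [v]).
Proof.
  intros [Hc [Hall [[x [l [Hp HA]]] _]]] HB. apply chain_app_cons in Hc.
  split; [tauto|split; [|split]].
  - intros w Hw. apply Hall. apply in_app_or in Hw. apply in_or_app.
    destruct Hw as [Hw|[<-|[]]]; simpl; auto.
  - destruct a as [|z a]; simpl in *; injection Hp as Hx Hl; subst; eauto.
  - exists v. split; auto. exists a. reflexivity.
Qed.

Lemma walk_within_cut A B U a v b c :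
  walk_within A B U (a ++ v :: b ++ v :: c) -> walk_within A B U (a ++ v :: c).
Proof.
  intros [Hc [Hall [[x [l [Hp HA]]] [y [Hy HB]]]]].
  apply chain_app_cons in Hc. destruct Hc as [Hc1 Hc2].
  apply (chain_app_cons (v :: b)) in Hc2.
  split; [apply chain_app_cons; tauto|split; [|split]].
  - intros w Hw. apply Hall. apply in_app_or in Hw. apply in_or_app.
    destruct Hw as [Hw|[<-|Hw]]; [auto|simpl; auto|].
    right. right. apply in_or_app. simpl. auto.
  - destruct a as [|z a]; simpl in *; injection Hp as Hx Hl; subst; eauto.
  - exists y. split; auto. apply ends_with_app.
    apply ends_with_app_cons in Hy. apply (ends_with_app_cons (v :: b)) in Hy. exact Hy.
Qed.

Lemma exists_shortest {T} (Pr : list T -> Prop) :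
  (exists p, Pr p) -> exists p, Pr p /\ forall q, Pr q -> length p <= length q.
Proof.
  intros [p Hp]. remember (length p) as n. revert p Hp Heqn.
  induction n as [n IH] using lt_wf_ind. intros p Hp Hn.
  destruct (classic (exists q, Pr q /\ length q < n)) as [[q [Hq Hl]]|Hno].
  - exact (IH (length q) Hl q Hq eq_refl).
  - exists p. split; auto. intros q Hq.
    destruct (le_lt_dec (length p) (length q)); auto.
    exfalso. apply Hno. exists q. split; [auto|lia].
Qed.

Lemma shortest_walk_is_dipath A B U p : walk_within A B U p ->
  (forall q, walk_within A B U q -> length p <= length q) ->
  AB_dipath D A B p /\ forall v, In v p -> U v.
Proof.
  intros Hp Hmin. pose proof Hp as [Hc [Hall [[x [l [Hxl HA]]] [y [[l' Hl'] HB]]]]].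
  split; [|intros v Hv; apply (Hall v Hv)].
  split; [split; [|split; [|split]]|split].
  - rewrite Hxl. discriminate.
  - apply NNPP. intro Hnd.
    destruct (not_NoDup (fun u w => classic (u = w)) Hnd) as [v [a [b [c Habc]]]].
    rewrite Habc in Hp. apply walk_within_cut, Hmin in Hp.
    rewrite Habc, !length_app in Hp. cbn [length] in Hp.
    rewrite length_app in Hp. cbn [length] in Hp. lia.
  - intros v Hv. apply (Hall v Hv).
  - exact Hc.
  - exists x, l. repeat split; auto. intros v Hv HAv.
    apply in_split in Hv. destruct Hv as [[|z a] [c Hac]]; rewrite Hac in Hp, Hmin.
    + rewrite Hxl in Hac. injection Hac as ->. reflexivity.
    + apply (walk_within_suffix _ _ _ (z :: a)), Hmin in Hp; auto.
      simpl in Hp. rewrite length_app in Hp. simpl in Hp. lia.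
  - exists l', y. repeat split; auto. intros v Hv HBv.
    apply in_split in Hv. destruct Hv as [a [[|z c] Hac]]; rewrite Hac in Hp, Hmin.
    + rewrite Hl' in Hac. apply app_inj_tail in Hac. symmetry. apply Hac.
    + apply (walk_within_prefix _ _ _ a v (z :: c)), Hmin in Hp; auto.
      rewrite !length_app in Hp. simpl in Hp. lia.
Qed.

Lemma reach_within_walk U u w : reach_within U u w -> vx D u -> U u ->
  exists l, chain D (u :: l) /\ (forall v, In v (u :: l) -> vx D v /\ U v) /\ ends_with (u :: l) w.
Proof.
  intros H. apply clos_rt_rt1n in H.
  induction H as [u|u y w [Ha [Hvy HUy]] _ IH]; intros Hvu HUu.
  - exists []. split; [simpl; auto|split; [intros v [<-|[]]; auto|exists []; reflexivity]].
  - destruct (IH Hvy HUy) as [l [Hc [Hall [l' Hl']]]].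
    exists (y :: l). split; [split; auto|split].
    + intros v [<-|Hv]; auto.
    + exists (u :: l'). rewrite Hl'. reflexivity.
Qed.

Lemma reach_within_dipath A B U u w : reach_within U u w -> vx D u -> U u -> A u -> B w ->
  exists p, AB_dipath D A B p /\ forall v, In v p -> U v.
Proof.
  intros H Hv HU HA HB. destruct (reach_within_walk U u w H Hv HU) as [l [Hc [Hall Hl]]].
  destruct (exists_shortest (walk_within A B U)) as [p [Hp Hmin]].
  - exists (u :: l). split; [exact Hc|split; [exact Hall|split; eauto]].
  - exists p. apply shortest_walk_is_dipath; auto.
Qed.

Lemma reach_within_mono (U U' : V -> Prop) u w :
  (forall v, U v -> U' v) -> reach_within U u w -> reach_within U' u w.
Proof.
  intros HU H. induction H as [x y [Ha [Hv Hs]]| |].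
  - apply rt_step. repeat split; auto.
  - apply rt_refl.
  - eapply rt_trans; eauto.
Qed.

Lemma dipath_reach_within A B U p x l y : AB_dipath D A B p -> (forall v, In v p -> U v) ->
  p = x :: l -> ends_with p y -> reach_within U x y.
Proof.
  intros [[_ [_ [Hvx Hc]]] _] HU -> Hy. revert x Hc Hvx HU Hy.
  induction l as [|z l IH]; intros x Hc Hvx HU [l' Hl'].
  - destruct l' as [|a [|b l']]; simpl in Hl'; injection Hl'; intros; subst; try discriminate.
    apply rt_refl.
  - destruct Hc as [Ha Hc]. eapply rt_trans.
    + apply rt_step. repeat split; [exact Ha|apply Hvx|apply HU]; simpl; auto.
    + apply IH; [exact Hc|intros v Hv; apply Hvx|intros v Hv; apply HU|]; simpl; auto.
      destruct l' as [|a l']; simpl in Hl'; injection Hl' as _ Hl'; [destruct l; discriminate|].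
      exists l'. exact Hl'.
Qed.

Lemma ray_le_of_avoiding X Y :
  (forall F, exists p, AB_dipath D (on D X) (on D Y) p /\ forall v, In v p -> avoiding F v) ->
  ray_le D X Y.
Proof.
  intros H. destruct (choice _ H) as [g Hg].
  (* h n collects the first n dipaths, each chosen to avoid all earlier ones. *)
  pose (h := fix h n := match n with O => [] | S k => h k ++ g (h k) end).
  exists (fun n => g (h n)). split; [intros n; apply Hg|].
  assert (Hsub : forall m n v, m < n -> In v (g (h m)) -> In v (h n)).
  { intros m n v Hmn Hv. induction n as [|n IHn]; [lia|]. simpl. apply in_or_app.
    destruct (Nat.eq_dec m n) as [->|Hne]; [right; auto|left; apply IHn; lia]. }
  intros m n Hmn v Hv Hv'. destruct (lt_dec m n) as [Hlt|Hge].
  - apply (proj2 (Hg (h n)) v Hv'). apply (Hsub m); auto.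
  - apply (proj2 (Hg (h m)) v Hv). apply (Hsub n); auto. lia.
Qed.

Lemma ray_le_of_reach X Y :
  (forall F, exists u w, on D X u /\ on D Y w /\ vx D u /\ avoiding F u /\
      reach_within (avoiding F) u w) -> ray_le D X Y.
Proof.
  intros H. apply ray_le_of_avoiding. intros F.
  destruct (H F) as [u [w [HX [HY [Hv [Hu Hr]]]]]]. eapply reach_within_dipath; eauto.
Qed.

Lemma no_antiray_of_potential (phi : V -> nat) :
  (forall u w, arc D u w -> phi u <= phi w) ->
  (forall K, exists L, forall v, vx D v -> phi v <= K -> In v L) ->
  forall r, ~ is_antiray D r.
Proof.
  intros Hmono Hfin r [Hv [Hinj Ha]].
  assert (Hb : forall n, phi (r n) <= phi (r 0)).
  { induction n; auto. specialize (Ha n). apply Hmono in Ha. lia. }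
  destruct (Hfin (phi (r 0))) as [L HL].
  destruct (injective_preimage_bounded r Hinj L) as [b Hbd].
  specialize (Hbd b (HL _ (Hv b) (Hb b))). lia.
Qed.

End Dipaths.

(** * Quarter-grids *)

Definition reach_along (E : nat * nat -> nat * nat -> Prop) (U : nat * nat -> Prop) :=
  clos_refl_trans (nat * nat) (fun x y => E x y /\ U y).

Definition outside N (v : nat * nat) := N < fst v \/ N < snd v.

Ltac outside_lia := intros; unfold outside in *; simpl in *; lia.

Definition box N : list (nat * nat) :=
  flat_map (fun a => map (fun b => (a, b)) (seq 0 (S N))) (seq 0 (S N)).

Lemma in_box N a b : a <= N -> b <= N -> In (a, b) (box N).
Proof.
  intros Ha Hb. apply in_flat_map. exists a. split; [apply in_seq; lia|].
  apply in_map, in_seq. lia.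
Qed.

Lemma list_in_box (F : list (nat * nat)) : exists N, 1 <= N /\ forall v, In v F -> ~ outside N v.
Proof.
  induction F as [|[a b] F [N [HN HF]]].
  - exists 1. split; [auto|]. intros v [].
  - exists (S (max N (max a b))). split; [lia|]. intros v [<-|Hv].
    + outside_lia.
    + apply HF in Hv. unfold outside in *. lia.
Qed.

Lemma injective_leaves_box (X : nat -> nat * nat) N :
  (forall a b, X a = X b -> a = b) -> exists t, outside N (X t).
Proof.
  intros Hinj. destruct (injective_preimage_bounded X Hinj (box N)) as [t Ht]. exists t.
  destruct (X t) as [a b] eqn:E. unfold outside; simpl.
  destruct (le_lt_dec a N); [|auto]. destruct (le_lt_dec b N); [|auto].
  exfalso. specialize (Ht t). rewrite E in Ht.
  specialize (Ht (in_box N a b ltac:(lia) ltac:(lia))). lia.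
Qed.

Lemma reach_along_ray E U (Hray : forall r x, 1 <= r -> 1 <= x -> E (r, x) (r, S x)) r c c' :
  1 <= r -> 1 <= c -> c <= c' -> (forall x, c < x <= c' -> U (r, x)) ->
  reach_along E U (r, c) (r, c').
Proof.
  intros Hr Hc Hle HU. induction Hle as [|c' Hle IH].
  - apply rt_refl.
  - eapply rt_trans; [apply IH; intros; apply HU; lia|].
    apply rt_step. split; [apply Hray; lia|apply HU; lia].
Qed.

Section QuarterGrid.
Variables (Vx : nat * nat -> Prop) (A : nat * nat -> nat * nat -> Prop).
Local Notation G := (Digraph (nat * nat) Vx A).
Hypothesis Vx_qvx : forall v, Vx v -> qvx v.

Lemma grid_no_antiray (phi : nat * nat -> nat) (c : nat) :
  (forall u w, A u w -> phi u <= phi w) ->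
  (forall v, Vx v -> fst v <= phi v + c /\ snd v <= phi v + c) ->
  forall r, ~ is_antiray G r.
Proof.
  intros Hmono Hb. apply (no_antiray_of_potential G phi Hmono).
  intros K. exists (box (K + c)). intros [a b] Hv HK. apply Hb in Hv. simpl in Hv.
  apply in_box; lia.
Qed.

Variable E : nat * nat -> nat * nat -> Prop.
Hypothesis reach_along_lift :
  forall U u w, reach_along E U u w -> Vx u -> Vx w -> reach_within G U u w.
Hypothesis to_first_ray : forall N, 1 <= N -> forall r c, qvx (r, c) -> outside N (r, c) ->
  exists C, N < C /\ reach_along E (outside N) (r, c) (1, C).
Hypothesis from_first_ray : forall N C, 1 <= N -> N < C -> exists H, forall r c, qvx (r, c) ->
  outside H (r, c) -> reach_along E (outside N) (1, C) (r, c).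

Lemma grid_ray_le Q R : is_ray G Q -> is_ray G R -> ray_le G Q R.
Proof.
  intros [HQv [HQi _]] [HRv [HRi _]]. apply ray_le_of_reach. intros F.
  destruct (list_in_box F) as [N [HN HF]].
  destruct (injective_leaves_box Q N HQi) as [t Ht].
  destruct (Q t) as [r c] eqn:EQ.
  assert (Hq : qvx (r, c)) by (rewrite <- EQ; apply Vx_qvx, HQv).
  destruct (to_first_ray N HN r c Hq Ht) as [C [HC Hto]].
  destruct (from_first_ray N C HN HC) as [H Hfrom].
  destruct (injective_leaves_box R H HRi) as [t' Ht'].
  destruct (R t') as [r' c'] eqn:ER.
  assert (Hw : qvx (r', c')) by (rewrite <- ER; apply Vx_qvx, HRv).
  exists (r, c), (r', c'). split; [exists t; auto|]. split; [exists t'; auto|].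
  split; [rewrite <- EQ; apply HQv|]. split; [intro Hin; apply HF in Hin; auto|].
  apply reach_within_mono with (U := outside N); [intros v Hv Hin; apply HF in Hin; auto|].
  apply reach_along_lift; [|rewrite <- EQ; apply HQv|rewrite <- ER; apply HRv].
  eapply rt_trans; [exact Hto|]. apply Hfrom; auto.
Qed.

Lemma grid_one_end (phi : nat * nat -> nat) (c : nat) :
  (exists r, is_ray G r) ->
  (forall u w, A u w -> phi u <= phi w) ->
  (forall v, Vx v -> fst v <= phi v + c /\ snd v <= phi v + c) ->
  has_exactly_one_end G.
Proof.
  intros [r Hr] Hmono Hb. split; [exists r; left; auto|].
  intros Q R [HQ|HQ] [HR|HR];
    try (exfalso; eapply grid_no_antiray; eauto; fail).
  split; apply grid_ray_le; auto.
Qed.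

End QuarterGrid.

Lemma reach_along_arc_lift (Vx : nat * nat -> Prop) (A : nat * nat -> nat * nat -> Prop) :
  (forall u w, A u w -> Vx w) ->
  forall U u w, reach_along A U u w -> reach_within (Digraph (nat * nat) Vx A) U u w.
Proof.
  intros HA U u w H. induction H as [x y [Hxy HU]| |].
  - apply rt_step. split; [exact Hxy|split; [apply (HA x y Hxy)|exact HU]].
  - apply rt_refl.
  - eapply rt_trans; eauto.
Qed.

Ltac nat_div_facts := repeat match goal with
 | |- context [?a / ?b] => let H := fresh in let H2 := fresh in
   pose proof (Nat.div_mod a b ltac:(lia)) as H;
   pose proof (Nat.mod_upper_bound a b ltac:(lia)) as H2;
   generalize dependent (a / b); generalize dependent (a mod b); intros
 end.

Local Notation Ed := (arc descending_cdqg).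

Lemma desc_ray_arc r x : 1 <= r -> 1 <= x -> Ed (r, x) (r, S x).
Proof. intros. simpl. unfold qvx, ray_edge; simpl. split; [lia|split; [lia|left; lia]]. Qed.

Lemma desc_diag_arc i m : 1 <= i -> 1 <= m -> Ed (i + 1, 2 * m) (i, 2 * m + 1).
Proof.
  intros. simpl. unfold qvx; simpl. split; [lia|split; [lia|]].
  right; left. exists i, (2 * m). split; auto. split; [exists m; lia|auto].
Qed.

Lemma desc_jump_arc i : 1 <= i -> Ed (1, 2 * i) (i + 1, 1).
Proof.
  intros. simpl. unfold qvx; simpl. split; [lia|split; [lia|]].
  right; right. exists i. auto.
Qed.

Lemma desc_staircase N i k m : 1 <= i -> 1 <= m -> N < 2 * m ->
  reach_along Ed (outside N) (i + k, 2 * m) (i, 2 * m + 2 * k).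
Proof.
  revert m. induction k as [|k IH]; intros m Hi Hm HN.
  - replace (i + 0) with i by lia. replace (2 * m + 2 * 0) with (2 * m) by lia. apply rt_refl.
  - eapply rt_trans; [apply rt_step; split|].
    + replace (i + S k) with (i + k + 1) by lia. apply desc_diag_arc; lia.
    + outside_lia.
    + eapply rt_trans; [apply rt_step; split; [apply desc_ray_arc; lia|outside_lia]|].
      replace (S (2 * m + 1)) with (2 * (m + 1)) by lia.
      replace (2 * m + 2 * S k) with (2 * (m + 1) + 2 * k) by lia. apply IH; lia.
Qed.

Lemma desc_to_first_ray N : 1 <= N -> forall r c, qvx (r, c) -> outside N (r, c) ->
  exists C, N < C /\ reach_along Ed (outside N) (r, c) (1, C).
Proof.
  intros HN r c [Hr Hc] Ho. unfold qvx in *; simpl in *.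
  exists (2 * (c + N + 1) + 2 * (r - 1)). split; [lia|].
  eapply rt_trans.
  - apply (reach_along_ray _ _ desc_ray_arc r c (2 * (c + N + 1))); try lia.
    outside_lia.
  - pose proof (desc_staircase N 1 (r - 1) (c + N + 1)) as H.
    replace (1 + (r - 1)) with r in H by lia. apply H; lia.
Qed.

Lemma desc_from_first_ray N C : 1 <= N -> N < C -> exists H, forall r c, qvx (r, c) ->
  outside H (r, c) -> reach_along Ed (outside N) (1, C) (r, c).
Proof.
  intros HN HC. exists (3 * C + 5 * N + 10). intros r c [Hr Hc] Ho.
  unfold qvx, outside in *; simpl in *.
  pose proof (reach_along_ray _ (outside N) desc_ray_arc) as Hray.
  set (t := max r (C + N + 2)).
  assert (Hjump : reach_along Ed (outside N) (1, C) (t, 1)).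
  { eapply rt_trans; [apply (Hray 1 C (2 * (t - 1))); outside_lia|].
    apply rt_step. split; [|outside_lia].
    replace t with (t - 1 + 1) at 2 by lia. apply desc_jump_arc; lia. }
  eapply rt_trans; [exact Hjump|].
  destruct (le_lt_dec (C + N + 2) r) as [Hrt|Hrt].
  - replace t with r by lia. apply Hray; outside_lia.
  - eapply rt_trans; [apply (Hray t 1 (2 * (N + 1))); outside_lia|].
    pose proof (desc_staircase N r (t - r) (N + 1)) as H. replace (r + (t - r)) with t in H by lia.
    eapply rt_trans; [apply H; lia|].
    apply Hray; outside_lia.
Qed.

Lemma desc_one_end : has_exactly_one_end descending_cdqg.
Proof.
  apply (grid_one_end qvx _ (fun v Hv => Hv) Ed) with
    (phi := fun v => 2 * fst v + 2 * ((snd v + 1) / 2)) (c := 0).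
  - intros U u w H _ _. revert H. apply reach_along_arc_lift. intros x y [_ [Hy _]]. exact Hy.
  - apply desc_to_first_ray.
  - apply desc_from_first_ray.
  - exists (fun n => (1, n + 1)). split; [|split].
    + intros n. unfold qvx; simpl; lia.
    + intros m n H. injection H. lia.
    + intros n. replace (S n + 1) with (S (n + 1)) by lia. apply desc_ray_arc; lia.
  - intros [a b] [a' b'] [_ [_ [[H1 H2]|[[i [j [Hi [[k ->] [H1 H2]]]]]|[i [Hi [H1 H2]]]]]]];
      cbn [fst snd] in *; try (injection H1; injection H2; intros; subst); nat_div_facts; lia.
  - intros [a b] _. cbn [fst snd]. nat_div_facts; lia.
Qed.

Local Notation Ea := (arc ascending_cdqg).

Lemma asc_ray_arc r x : 1 <= r -> 1 <= x -> Ea (r, x) (r, S x).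
Proof. intros. simpl. unfold qvx, ray_edge; simpl. split; [lia|split; [lia|left; lia]]. Qed.

Lemma asc_first_arc m : Ea (1, 2 * m + 1) (2, 2 * m + 1).
Proof.
  simpl. unfold qvx; simpl. split; [lia|split; [lia|]].
  right; left. exists (2 * m + 1). split; [exists m; lia|auto].
Qed.

Lemma asc_cross_arc i m : 2 <= i -> Ea (i, 2 * m + 4) (i + 1, 2 * m + 1).
Proof.
  intros. simpl. unfold qvx; simpl. split; [lia|split; [lia|]].
  right; right; left. exists i, (2 * m + 1). split; auto. split; [exists m; lia|].
  split; f_equal; lia.
Qed.

Lemma asc_jump_arc i : 2 <= i -> Ea (i, 2) (1, 2 * (i - 1)).
Proof.
  intros. simpl. unfold qvx; simpl. split; [lia|split; [lia|]].
  right; right; right. exists i. auto.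
Qed.

Lemma asc_staircase N k i m : 2 <= i ->
  (forall k', k' <= k -> N < i + k' \/ N < 2 * (m + k - k') + 1) ->
  reach_along Ea (outside N) (i, 2 * (m + k) + 1) (i + k, 2 * m + 1).
Proof.
  revert i. induction k as [|k IH]; intros i Hi HN.
  - replace (i + 0) with i by lia. replace (m + 0) with m by lia. apply rt_refl.
  - eapply rt_trans; [apply rt_step; split; [apply asc_ray_arc; lia|]|].
    { specialize (HN 0). outside_lia. }
    eapply rt_trans; [apply rt_step; split|].
    + replace (S (2 * (m + S k) + 1)) with (2 * (m + k) + 4) by lia. apply asc_cross_arc; lia.
    + specialize (HN 1). outside_lia.
    + replace (i + S k) with (i + 1 + k) by lia. apply IH; [lia|].
      intros k' Hk'. specialize (HN (S k')). lia.
Qed.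

Lemma asc_to_first_ray N : 1 <= N -> forall r c, qvx (r, c) -> outside N (r, c) ->
  exists C, N < C /\ reach_along Ea (outside N) (r, c) (1, C).
Proof.
  intros HN r c [Hr Hc] Ho. unfold qvx, outside in *; simpl in *.
  destruct (Nat.eq_dec r 1) as [->|Hr1]; [exists c; split; [lia|apply rt_refl]|].
  set (m := c + 2 * N + 3).
  exists (2 * (r + m - 1)). split; [lia|].
  eapply rt_trans.
  { apply (reach_along_ray _ _ asc_ray_arc r c (2 * m + 1)); try lia.
    outside_lia. }
  eapply rt_trans.
  { pose proof (asc_staircase N m r 0) as H. replace (2 * (0 + m) + 1) with (2 * m + 1) in H by lia.
    apply H; [lia|]. intros k' Hk'. lia. }
  eapply rt_trans; [apply rt_step; split; [apply asc_ray_arc; lia|outside_lia]|].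
  apply rt_step. split; [apply asc_jump_arc; lia|outside_lia].
Qed.

Lemma asc_from_first_ray N C : 1 <= N -> N < C -> exists H, forall r c, qvx (r, c) ->
  outside H (r, c) -> reach_along Ea (outside N) (1, C) (r, c).
Proof.
  intros HN HC. exists (C + 3 * N + 10). intros r c [Hr Hc] Ho.
  unfold qvx, outside in *; simpl in *.
  pose proof (reach_along_ray _ (outside N) asc_ray_arc) as Hray.
  destruct (Nat.eq_dec r 1) as [->|Hr1].
  { apply Hray; outside_lia. }
  assert (Hm : exists m, 2 * m + 1 <= c <= 2 * m + 2) by (exists ((c - 1) / 2); nat_div_facts; lia).
  destruct Hm as [m Hm]. set (k := r - 2).
  eapply rt_trans; [apply (Hray 1 C (2 * (m + k) + 1)); outside_lia|].
  eapply rt_trans; [apply rt_step; split; [apply asc_first_arc|outside_lia]|].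
  eapply rt_trans; [apply (asc_staircase N k 2 m); [lia|intros k' Hk'; lia]|].
  replace (2 + k) with r by lia. apply Hray; outside_lia.
Qed.

(* On the first ray the potential is the column; elsewhere it rounds the column up to an
   even number and adds twice the ray index, so the crossing arcs keep it constant. *)
Definition asc_potential (v : nat * nat) :=
  if fst v =? 1 then snd v else 2 * fst v + 2 * ((snd v + 1) / 2) - 5.

Lemma asc_one_end : has_exactly_one_end ascending_cdqg.
Proof.
  apply (grid_one_end qvx _ (fun v Hv => Hv) Ea) with (phi := asc_potential) (c := 5).
  - intros U u w H _ _. revert H. apply reach_along_arc_lift. intros x y [_ [Hy _]]. exact Hy.
  - apply asc_to_first_ray.
  - apply asc_from_first_ray.
  - exists (fun n => (1, n + 1)). split; [|split].
    + intros n. unfold qvx; simpl; lia.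
    + intros m n H. injection H. lia.
    + intros n. replace (S n + 1) with (S (n + 1)) by lia. apply asc_ray_arc; lia.
  - intros [a b] [a' b'] [[Ha Hb] [[Ha' Hb'] [[H1 H2]|[[j [[k ->] [H1 H2]]]|
      [[i [j [Hi [[k ->] [H1 H2]]]]]|[i [Hi [H1 H2]]]]]]]];
      unfold asc_potential; cbn [fst snd] in *; try (injection H1; injection H2; intros; subst);
      repeat match goal with |- context [?x =? ?y] => destruct (Nat.eqb_spec x y) end;
      nat_div_facts; lia.
  - intros [a b] [Ha Hb]. unfold asc_potential; cbn [fst snd] in *.
    destruct (Nat.eqb_spec a 1); nat_div_facts; lia.
Qed.

Section Suppression.
Variable E : nat * nat -> nat * nat -> Prop.
Hypothesis E_qvx : forall x y, E x y -> qvx x /\ qvx y.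

Lemma supp_walk_snoc u v y : supp_walk E u v -> suppressible E v -> E v y -> supp_walk E u y.
Proof.
  intros H. induction H as [u v Huv|u v' v Huv' Hs Hw IH]; intros Hsv Hvy.
  - eapply sw_step; eauto. apply sw_one; auto.
  - eapply sw_step; eauto.
Qed.

(* The walk is split at its unsuppressible vertices; the pending part from u to v
   consists of suppressed vertices and becomes a single arc of the suppressed digraph. *)
Lemma reach_along_suppress_pending U v w :
  clos_refl_trans_1n _ (fun x y => E x y /\ U y) v w -> qvx w -> ~ suppressible E w ->
  forall u, qvx u -> ~ suppressible E u -> u = v \/ (supp_walk E u v /\ suppressible E v) ->
  reach_within (suppress E) U u w.
Proof.
  intros H. induction H as [v|v y w [Hvy HUy] _ IH]; intros Hw Hnw u Hu Hnu Hpend.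
  - destruct Hpend as [->|[_ Hs]]; [apply rt_refl|contradiction].
  - destruct (E_qvx _ _ Hvy) as [_ Hqy].
    assert (Hwalk : supp_walk E u y).
    { destruct Hpend as [->|[Hw' Hs]]; [apply sw_one; auto|eapply supp_walk_snoc; eauto]. }
    destruct (classic (suppressible E y)) as [Hsy|Hnsy].
    + apply IH; auto.
    + apply rt_trans with y; [apply rt_step|apply IH; auto].
      split; [split; [split; auto|split; [split; auto|exact Hwalk]]|split; [split; auto|exact HUy]].
Qed.

Lemma reach_along_suppress U u w : reach_along E U u w -> vx (suppress E) u -> vx (suppress E) w ->
  reach_within (suppress E) U u w.
Proof.
  intros H [Hu Hnu] [Hw Hnw]. apply clos_rt_rt1n in H.
  eapply reach_along_suppress_pending; eauto.
Qed.

Lemma supp_walk_potential (phi : nat * nat -> nat) u w :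
  (forall x y, E x y -> phi x <= phi y) -> supp_walk E u w -> phi u <= phi w.
Proof.
  intros Hmono H. induction H as [u w H|u v w H _ _ IH]; [auto|]. apply Hmono in H. lia.
Qed.

End Suppression.

Local Notation Eb := bqg_pre_edge.

Lemma bqg_ray_arc r x : 1 <= r -> 1 <= x -> Eb (r, x) (r, S x).
Proof. intros. unfold bqg_pre_edge, qvx, ray_edge; simpl. split; [lia|split; [lia|left; lia]]. Qed.

Lemma bqg_down_arc i j u w : 1 <= i -> u = (i, 4 * j + 7) -> w = (i + 1, 4 * j + 1) -> Eb u w.
Proof.
  intros Hi -> ->. unfold bqg_pre_edge, qvx; simpl. split; [lia|split; [lia|]].
  right; left. exists i, j. auto.
Qed.

Lemma bqg_up_arc i j u w : 1 <= i -> u = (i + 1, 4 * j + 2) -> w = (i, 4 * j + 8) -> Eb u w.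
Proof.
  intros Hi -> ->. unfold bqg_pre_edge, qvx; simpl. split; [lia|split; [lia|]].
  right; right. exists i, j. auto.
Qed.

Lemma bqg_up_staircase N k i j : 1 <= i -> N < 4 * j + 2 ->
  reach_along Eb (outside N) (i + k, 4 * j + 2) (i, 4 * (j + 2 * k) + 2).
Proof.
  revert j. induction k as [|k IH]; intros j Hi HN.
  - replace (i + 0) with i by lia. replace (j + 2 * 0) with j by lia. apply rt_refl.
  - eapply rt_trans; [apply rt_step; split|].
    + apply (bqg_up_arc (i + k) j); [lia|f_equal; lia|reflexivity].
    + outside_lia.
    + eapply rt_trans.
      { apply (reach_along_ray _ _ bqg_ray_arc (i + k) (4 * j + 8) (4 * (j + 2) + 2)); try lia.
        outside_lia. }
      replace (4 * (j + 2 * S k) + 2) with (4 * ((j + 2) + 2 * k) + 2) by lia. apply IH; lia.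
Qed.

Lemma bqg_down_staircase N k i j : 1 <= i ->
  (forall k', k' <= k -> N < i + k' \/ N < 4 * (j + k - k') + 1) ->
  reach_along Eb (outside N) (i, 4 * (j + k) + 7) (i + k, 4 * j + 7).
Proof.
  revert i. induction k as [|k IH]; intros i Hi HN.
  - replace (i + 0) with i by lia. replace (j + 0) with j by lia. apply rt_refl.
  - assert (HN1 := HN 1). eapply rt_trans; [apply rt_step; split|].
    + apply (bqg_down_arc i (j + S k)); [lia|f_equal; lia|reflexivity].
    + outside_lia.
    + eapply rt_trans.
      { apply (reach_along_ray _ _ bqg_ray_arc (i + 1) (4 * (j + S k) + 1) (4 * (j + k) + 7));
          try lia.
        outside_lia. }
      replace (i + S k) with (i + 1 + k) by lia. apply IH; [lia|].
      intros k' Hk'. specialize (HN (S k')). lia.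
Qed.

Lemma bqg_to_first_ray N : 1 <= N -> forall r c, qvx (r, c) -> outside N (r, c) ->
  exists C, N < C /\ reach_along Eb (outside N) (r, c) (1, C).
Proof.
  intros HN r c [Hr Hc] Ho. unfold qvx, outside in *; simpl in *.
  set (j := c + N + 1).
  exists (4 * (j + 2 * (r - 1)) + 2). split; [lia|].
  eapply rt_trans.
  { apply (reach_along_ray _ _ bqg_ray_arc r c (4 * j + 2)); try lia.
    outside_lia. }
  pose proof (bqg_up_staircase N (r - 1) 1 j) as H. replace (1 + (r - 1)) with r in H by lia.
  apply H; lia.
Qed.

Lemma bqg_from_first_ray N C : 1 <= N -> N < C -> exists H, forall r c, qvx (r, c) ->
  outside H (r, c) -> reach_along Eb (outside N) (1, C) (r, c).
Proof.
  intros HN HC. exists (C + 10 * N + 30). intros r c [Hr Hc] Ho.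
  unfold qvx, outside in *; simpl in *.
  pose proof (reach_along_ray _ (outside N) bqg_ray_arc) as Hray.
  destruct (Nat.eq_dec r 1) as [->|Hr1].
  { apply Hray; outside_lia. }
  assert (Hj : exists j, 4 * j + 1 <= c <= 4 * j + 4) by (exists ((c - 1) / 4); nat_div_facts; lia).
  destruct Hj as [j Hj]. set (k := r - 2).
  eapply rt_trans; [apply (Hray 1 C (4 * (j + k) + 7)); outside_lia|].
  eapply rt_trans; [apply (bqg_down_staircase N k 1 j); [lia|intros k' Hk'; lia]|].
  eapply rt_trans; [apply rt_step; split|].
  - apply (bqg_down_arc (1 + k) j); [lia|reflexivity|reflexivity].
  - outside_lia.
  - replace (1 + k + 1) with r by lia. apply Hray; outside_lia.
Qed.

(* Every vertex of the second ray beyond x^2_4 has a neighbour on another ray. *)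
Lemma bqg_second_ray_unsuppressed c : 5 <= c -> ~ suppressible Eb (2, c).
Proof.
  intros Hc [_ [_ [_ Hsame]]].
  pose proof (Nat.div_mod c 4 ltac:(lia)) as Hd.
  pose proof (Nat.mod_upper_bound c 4 ltac:(lia)) as Hb.
  set (q := c / 4) in *. set (rm := c mod 4) in *. clearbody q rm.
  assert (rm = 0 \/ rm = 1 \/ rm = 2 \/ rm = 3) as [Hr|[Hr|[Hr|Hr]]] by lia.
  - assert (H : Eb (3, 4 * (q - 2) + 2) (2, c))
      by (apply (bqg_up_arc 2 (q - 2)); [lia|reflexivity|f_equal; lia]).
    specialize (Hsame _ (or_introl H)). simpl in Hsame. lia.
  - assert (H : Eb (1, 4 * q + 7) (2, c))
      by (apply (bqg_down_arc 1 q); [lia|reflexivity|f_equal; lia]).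
    specialize (Hsame _ (or_introl H)). simpl in Hsame. lia.
  - assert (H : Eb (2, c) (1, 4 * q + 8))
      by (apply (bqg_up_arc 1 q); [lia|f_equal; lia|reflexivity]).
    specialize (Hsame _ (or_intror H)). simpl in Hsame. lia.
  - assert (H : Eb (2, c) (3, 4 * (q - 1) + 1))
      by (apply (bqg_down_arc 2 (q - 1)); [lia|f_equal; lia|f_equal; lia]).
    specialize (Hsame _ (or_intror H)). simpl in Hsame. lia.
Qed.

Lemma bqg_one_end : has_exactly_one_end bidirected_quarter_grid.
Proof.
  assert (Eb_qvx : forall x y, Eb x y -> qvx x /\ qvx y) by (intros x y [Hx [Hy _]]; auto).
  assert (Hmono : forall x y, Eb x y -> 6 * fst x + snd x <= 6 * fst y + snd y).
  { intros [a b] [a' b'] [_ [_ [[H1 H2]|[[i [j [Hi [H1 H2]]]]|[i [j [Hi [H1 H2]]]]]]]];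
      cbn [fst snd] in *; try (injection H1; injection H2; intros; subst); lia. }
  apply (grid_one_end _ _ (fun v Hv => proj1 Hv) Eb)
    with (phi := fun v => 6 * fst v + snd v) (c := 0).
  - apply reach_along_suppress, Eb_qvx.
  - apply bqg_to_first_ray.
  - apply bqg_from_first_ray.
  - assert (Hv : forall n, vx bidirected_quarter_grid (2, n + 5)).
    { intros n. split; [unfold qvx; simpl; lia|apply bqg_second_ray_unsuppressed; lia]. }
    exists (fun n => (2, n + 5)). split; [exact Hv|split].
    + intros m n H. injection H. lia.
    + intros n. split; [apply Hv|split; [apply (Hv (S n))|]].
      apply sw_one. replace (S n + 5) with (S (n + 5)) by lia. apply bqg_ray_arc; lia.
  - intros u w [_ [_ H]]. exact (supp_walk_potential _ _ _ _ Hmono H).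
  - intros [a b] _. cbn [fst snd]. lia.
Qed.

(** * Complete ray digraphs *)

Lemma uniform_visit_bound {A} (X : nat -> A) (R : nat -> nat -> A) :
  (forall k, exists N, forall t n, X t = R k n -> n < N) ->
  forall J, exists M, forall k t n, k < J -> X t = R k n -> n < M.
Proof.
  intros Hb J. induction J as [|J [M HM]]; [exists 0; intros; lia|].
  destruct (Hb J) as [N HN]. exists (max M N). intros k t n Hk Ht.
  destruct (Nat.eq_dec k J) as [->|Hne]; [apply HN in Ht|apply (HM k) in Ht]; lia.
Qed.

Section CompleteRayDigraph.
Variable D : digraph.
Local Notation V := (vtype D).
Variables (R : nat -> nat -> V) (P : list V -> Prop).
Hypothesis R_ray : forall i, is_ray D (R i).
Hypothesis R_disjoint : forall i j m n, i <> j -> R i m <> R j n.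
Hypothesis P_disjoint : forall p q, P p -> P q -> p <> q -> disjoint_paths D p q.
Hypothesis P_infinite : forall i i', i <> i' -> exists f : nat -> list V,
  (forall n, P (f n) /\ AB_dipath D (on D (R i)) (on D (R i')) (f n)) /\
  (forall m n, f m = f n -> m = n).
Hypothesis P_start : forall i, i <> 0 -> exists p l, P p /\
  AB_dipath D (on D (R 0)) (on D (R i)) p /\ p = l ++ [R i 0].
Hypothesis vx_cover : forall v, vx D v -> (exists i n, R i n = v) \/ (exists p, P p /\ In v p).
Hypothesis arc_cover : forall u w, arc D u w ->
  (exists i n, u = R i n /\ w = R i (S n)) \/ (exists p l1 l2, P p /\ p = l1 ++ u :: w :: l2).

Definition on_rays v := exists i n, R i n = v.
Definition free_from (F : list V) i n := forall n', n <= n' -> ~ In (R i n') F.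

Lemma ray_index_inj i j m n : R i m = R j n -> i = j /\ m = n.
Proof.
  intros H. destruct (Nat.eq_dec i j) as [->|Hne].
  - split; auto. destruct (R_ray j) as [_ [Hinj _]]. auto.
  - exfalso. exact (R_disjoint i j m n Hne H).
Qed.

Lemma ex_free_region (F : list V) : exists I B, forall i n, I <= i \/ B <= n -> free_from F i n.
Proof.
  assert (Hb : exists I B, forall i n, In (R i n) F -> i < I /\ n < B).
  { induction F as [|a F [I [B HIB]]]; [exists 0, 0; intros i n []|].
    destruct (classic (exists i n, R i n = a)) as [[i0 [n0 Ha]]|Hno].
    - exists (max I (S i0)), (max B (S n0)). intros i n [Hin|Hin].
      + rewrite Hin in Ha. apply ray_index_inj in Ha. lia.
      + apply HIB in Hin. lia.
    - exists I, B. intros i n [Hin|Hin]; [exfalso; eauto|auto]. }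
  destruct Hb as [I [B HIB]]. exists I, B. intros i n Hin n' Hn' HF. apply HIB in HF. lia.
Qed.

Lemma off_rays_arc_in_path p u w :
  P p -> In u p -> ~ on_rays u -> arc D u w \/ arc D w u -> In w p.
Proof.
  intros Hp Hu Hoff Harc.
  assert (Hq : exists q, P q /\ In u q /\ In w q).
  { destruct Harc as [Ha|Ha]; apply arc_cover in Ha;
      destruct Ha as [[i [n [Hl Hr]]]|[q [l1 [l2 [Hq Hql]]]]].
    all: try (exfalso; apply Hoff; do 2 eexists; symmetry; eassumption).
    all: exists q; split; [exact Hq|rewrite Hql; split; apply in_or_app; simpl; auto]. }
  destruct Hq as [q [Hq [Huq Hwq]]].
  destruct (classic (p = q)) as [->|Hne]; [exact Hwq|].
  exfalso. exact (P_disjoint p q Hp Hq Hne u Hu Huq).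
Qed.

(* Off the rays an (anti-)ray is trapped inside a single finite dipath of P. *)
Lemma meets_rays_infinitely X :
  ray_or_antiray D X -> forall t, exists t', t <= t' /\ on_rays (X t').
Proof.
  intros HX t. apply NNPP. intro Hno.
  assert (Hoff : forall k, ~ on_rays (X (t + k)))
    by (intros k Ho; apply Hno; exists (t + k); split; [lia|auto]).
  destruct (vx_cover (X t) (ray_or_antiray_vx D X HX t)) as [Hon|[p [Hp Hin]]].
  { apply (Hoff 0). rewrite Nat.add_0_r. exact Hon. }
  assert (Hall : forall k, In (X (t + k)) p).
  { induction k as [|k IH]; [rewrite Nat.add_0_r; exact Hin|].
    rewrite Nat.add_succ_r. apply (off_rays_arc_in_path p (X (t + k))); auto.
    destruct HX as [[_ [_ Ha]]|[_ [_ Ha]]]; [left|right]; apply Ha. }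
  destruct (injective_preimage_bounded X (ray_or_antiray_injective D X HX) p) as [b Hb].
  specialize (Hb (t + b) (Hall b)). lia.
Qed.

Lemma meets_rays_outside X : ray_or_antiray D X ->
  forall J B, exists t i n, X t = R i n /\ (J <= i \/ B <= n).
Proof.
  intros HX J B.
  set (L := flat_map (fun i => map (R i) (seq 0 B)) (seq 0 J)).
  destruct (injective_avoids_list X on_rays (ray_or_antiray_injective D X HX)
              (meets_rays_infinitely X HX) L) as [t [[i [n Hin]] HL]].
  exists t, i, n. split; [auto|].
  destruct (le_lt_dec J i); auto. destruct (le_lt_dec B n); auto. exfalso. apply HL.
  rewrite <- Hin. apply in_flat_map. exists i. split; [apply in_seq; lia|apply in_map, in_seq; lia].
Qed.

Lemma eventually_avoids (g : nat -> list V) :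
  (forall k k', k <> k' -> disjoint_paths D (g k) (g k')) ->
  forall L, exists K, forall k, K <= k -> forall v, In v (g k) -> ~ In v L.
Proof.
  intros Hd L. induction L as [|a L [K HK]]; [exists 0; intros k _ v _ []|].
  destruct (classic (exists k0, In a (g k0))) as [[k0 Hk0]|Hno].
  - exists (max K (S k0)). intros k Hk v Hv [->|HvL].
    + exact (Hd k0 k ltac:(lia) v Hk0 Hv).
    + exact (HK k ltac:(lia) v Hv HvL).
  - exists K. intros k Hk v Hv [->|HvL]; [apply Hno; eauto|exact (HK k Hk v Hv HvL)].
Qed.

Lemma far_connecting_path i i' L : i <> i' -> exists p a e l, P p /\
  AB_dipath D (on D (R i)) (on D (R i')) p /\ (forall v, In v p -> ~ In v L) /\
  p = R i a :: l /\ ends_with D p (R i' e).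
Proof.
  intros Hii. destruct (P_infinite i i' Hii) as [f [Hf Hfinj]].
  destruct (eventually_avoids f) with (L := L) as [K HK].
  { intros k k' Hkk. apply P_disjoint; try apply Hf. intro He. apply Hfinj in He. auto. }
  destruct (Hf K) as [HP HAB].
  pose proof HAB as [_ [[x [l [Hp [[a Ha] _]]]] [l' [y [Hp' [[e He] _]]]]]].
  exists (f K), a, e, l. split; [auto|split; [auto|split; [apply HK; auto|split]]].
  - rewrite Hp, Ha. reflexivity.
  - exists l'. rewrite He. exact Hp'.
Qed.

Lemma free_segment_reach F i n n' : free_from F i n -> n <= n' ->
  reach_within D (avoiding D F) (R i n) (R i n').
Proof.
  intros Hfree Hn. induction Hn as [|n' Hn IH]; [apply rt_refl|].
  eapply rt_trans; [exact IH|]. apply rt_step.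
  destruct (R_ray i) as [Hv [_ Ha]]. split; [apply Ha|split; [apply Hv|apply Hfree; lia]].
Qed.

Lemma reach_between_rays F i k n : free_from F i n ->
  exists e, free_from F k e /\ reach_within D (avoiding D F) (R i n) (R k e).
Proof.
  intros Hfree. destruct (ex_free_region F) as [I [B HIB]].
  destruct (Nat.eq_dec i k) as [<-|Hik]; [exists n; split; [auto|apply rt_refl]|].
  destruct (far_connecting_path i k (F ++ map (R i) (seq 0 n) ++ map (R k) (seq 0 B)) Hik)
    as [p [a [e [l [HP [HAB [Havoid [Hp He]]]]]]]].
  assert (Hna : n <= a).
  { destruct (le_lt_dec n a); auto. exfalso. apply (Havoid (R i a)); [rewrite Hp; simpl; auto|].
    apply in_or_app; right; apply in_or_app; left. apply in_map, in_seq; lia. }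
  assert (HBe : B <= e).
  { destruct (le_lt_dec B e); auto. exfalso. apply (Havoid (R k e)); [apply ends_with_In; auto|].
    apply in_or_app; right; apply in_or_app; right. apply in_map, in_seq; lia. }
  exists e. split; [apply HIB; auto|].
  eapply rt_trans; [apply free_segment_reach; eauto|].
  eapply dipath_reach_within; [exact HAB| |exact Hp|exact He].
  intros v Hv HF. apply (Havoid v Hv). apply in_or_app; auto.
Qed.

(* Via the dipaths of P_start, which end at the first vertices of the rays. *)
Lemma reach_high_rays F m : free_from F 0 m ->
  exists J, forall i n, J <= i -> reach_within D (avoiding D F) (R 0 m) (R i n).
Proof.
  intros Hfree.
  assert (Hs : forall j, exists p, P p /\ AB_dipath D (on D (R 0)) (on D (R (S j))) p /\
                                   ends_with D p (R (S j) 0)).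
  { intros j. destruct (P_start (S j) ltac:(lia)) as [p [l [Hp [HAB Hl]]]].
    exists p. split; [exact Hp|split; [exact HAB|exists l; exact Hl]]. }
  destruct (choice _ Hs) as [s Hsj].
  destruct (eventually_avoids s) with (L := F ++ map (R 0) (seq 0 m)) as [K HK].
  { intros j j' Hjj. destruct (Hsj j) as [Hp [_ [l1 Hl1]]]. destruct (Hsj j') as [Hp' [_ [l2 Hl2]]].
    apply P_disjoint; auto. intro He. rewrite He, Hl2 in Hl1. apply app_inj_tail in Hl1.
    destruct Hl1 as [_ Hl1]. apply ray_index_inj in Hl1. lia. }
  destruct (ex_free_region F) as [I [B HIB]].
  exists (S (max I K)). intros i n Hi.
  destruct (Hsj (i - 1)) as [Hp [HAB Hend]]. replace (S (i - 1)) with i in * by lia.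
  pose proof HAB as [_ [[x [l [Hxl [[a Ha] _]]]] _]].
  assert (Hma : m <= a).
  { destruct (le_lt_dec m a); auto. exfalso. apply (HK (i - 1) ltac:(lia) (R 0 a)).
    - rewrite Hxl, Ha. simpl; auto.
    - apply in_or_app; right. apply in_map, in_seq; lia. }
  eapply rt_trans; [apply free_segment_reach; eauto|].
  eapply rt_trans;
    [eapply dipath_reach_within; [exact HAB| |rewrite Hxl, Ha; reflexivity|exact Hend]|].
  - intros v Hv HF. apply (HK (i - 1) ltac:(lia) v Hv). apply in_or_app; auto.
  - apply free_segment_reach; [apply HIB; lia|lia].
Qed.

Lemma reach_from_first_ray Y : ray_or_antiray D Y ->
  forall F m, free_from F 0 m -> exists t, reach_within D (avoiding D F) (R 0 m) (Y t).
Proof.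
  intros HY F m Hfree.
  destruct (classic (exists k, forall N, exists t n, N <= n /\ Y t = R k n)) as [[k Hk]|Hbounded].
  - destruct (reach_between_rays F 0 k m Hfree) as [e [Hfe Hreach]].
    destruct (Hk e) as [t [n [Hen Ht]]]. exists t. rewrite Ht.
    eapply rt_trans; [exact Hreach|]. apply free_segment_reach; auto.
  - assert (Hb : forall k, exists N, forall t n, Y t = R k n -> n < N).
    { intros k. apply NNPP. intro Hc. apply Hbounded. exists k. intros N. apply NNPP. intro Hc2.
      apply Hc. exists N. intros t n Ht. destruct (le_lt_dec N n); auto. exfalso. eauto. }
    destruct (reach_high_rays F m Hfree) as [J HJ].
    destruct (uniform_visit_bound Y R Hb J) as [M HM].
    destruct (meets_rays_outside Y HY J M) as [t [i [n [Ht Hfar]]]].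
    assert (HJi : J <= i) by (destruct (le_lt_dec J i); auto; specialize (HM i t n l Ht); lia).
    exists t. rewrite Ht. apply HJ; auto.
Qed.

Lemma complete_ray_digraph_ray_le X Y : ray_or_antiray D X -> ray_or_antiray D Y -> ray_le D X Y.
Proof.
  intros HX HY. apply ray_le_of_reach. intros F.
  destruct (ex_free_region F) as [I [B HIB]].
  destruct (meets_rays_outside X HX I B) as [t [i [n [Ht Hfar]]]].
  destruct (reach_between_rays F i 0 n (HIB i n Hfar)) as [m [Hm Hto]].
  destruct (reach_from_first_ray Y HY F m Hm) as [t' Hfrom].
  exists (X t), (Y t'). split; [exists t; auto|split; [exists t'; auto|split]].
  - apply (ray_or_antiray_vx D X HX).
  - rewrite Ht. split; [apply (HIB i n Hfar n); auto|eapply rt_trans; eauto].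
Qed.

End CompleteRayDigraph.

Lemma complete_ray_digraph_one_end (D : digraph) :
  is_complete_ray_digraph D -> has_exactly_one_end D.
Proof.
  intros [R [P [HR [Hdisj [_ [HPd [Hinf [Hstart [Hvx Harc]]]]]]]]]. split.
  - exists (R 0). left. apply HR.
  - intros Q Q' HQ HQ'. split; eapply complete_ray_digraph_ray_le; eauto.
Qed.

Theorem lemma4p1 :
  has_exactly_one_end bidirected_quarter_grid /\
  has_exactly_one_end ascending_cdqg /\
  has_exactly_one_end descending_cdqg /\
  (forall D : digraph, is_complete_ray_digraph D -> has_exactly_one_end D).
Proof.
  split; [exact bqg_one_end|].
  split; [exact asc_one_end|].
  split; [exact desc_one_end|].
  exact complete_ray_digraph_one_end.
Qed.
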